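(* Let $A=(Q,\Sigma,\delta,q_0,F)$ be a nondeterministic finite automaton, and let $A'=(2^Q,\Sigma,\delta',\{q_0\},F')$ be the deterministic automaton obtained from $A$ by the powerset construction, i.e. $\delta'(P,a)=\bigcup_{p\in P}\delta(p,a)$ for $P\subseteq Q$, $a\in\Sigma$ (extended to words in the usual way), and $F'=\{P\subseteq Q\mid P\cap F\neq\emptyset\}$. Assume that the part of $A'$ reachable from $\{q_0\}$ is the minimal deterministic finite automaton equivalent to $A$, and that this automaton is not permutation-free. Suppose $n\ge 2$, that $P_0,P_1,\ldots,P_{n-1}\subseteq Q$ are pairwise distinct states of this automaton, and that a word $w\in\Sigma^*$ induces a non-trivial permutation on them, namely $\delta'(P_i,w)=P_{i+1}$ for $0\le i<n-1$ and $\delta'(P_{n-1},w)=P_0$. Then there are no two indices $i\neq j$ with $P_i\subseteq P_j$.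
   Context: A deterministic finite automaton is permutation-free if there is no word $w\in\Sigma^*$ that induces a non-trivial (i.e. non-identity) permutation of some subset of its set of states, where $w$ induces a permutation of a set $S$ of states if the map $q\mapsto \delta(q,w)$ restricts to a bijection of $S$. *)

From mathcomp Require Import all_boot.
Set Implicit Arguments. Unset Strict Implicit. Unset Printing Implicit Defensive.

Definition pstep (Q Sigma : finType) (delta : Q -> Sigma -> {set Q})
  (P : {set Q}) (a : Sigma) : {set Q} :=
  \bigcup_(p in P) delta p a.

Definition pdelta (Q Sigma : finType) (delta : Q -> Sigma -> {set Q})
  (P : {set Q}) (w : seq Sigma) : {set Q} :=
  foldl (pstep delta) P w.

Definition paccept (Q : finType) (F : {set Q}) (P : {set Q}) : bool :=
  P :&: F != set0.

Definition preachable (Q Sigma : finType) (delta : Q -> Sigma -> {set Q})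
  (q0 : Q) (P : {set Q}) : Prop :=
  exists w : seq Sigma, pdelta delta [set q0] w = P.

(* The reachable part of A' is the minimal DFA equivalent to A:
   (it is reachable by construction and) no two distinct reachable states
   are equivalent (Myhill-Nerode), i.e. every two distinct reachable states
   are distinguished by some word. *)
Definition reachable_part_minimal (Q Sigma : finType)
  (delta : Q -> Sigma -> {set Q}) (q0 : Q) (F : {set Q}) : Prop :=
  forall P R : {set Q},
    preachable delta q0 P -> preachable delta q0 R -> P <> R ->
    exists u : seq Sigma,
      paccept F (pdelta delta P u) != paccept F (pdelta delta R u).

Definition reachable_part_permutation_free (Q Sigma : finType)
  (delta : Q -> Sigma -> {set Q}) (q0 : Q) : Prop :=
  ~ exists (w : seq Sigma) (S : {set {set Q}}),
      [/\ (forall P, P \in S -> preachable delta q0 P),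
          (forall P, P \in S -> pdelta delta P w \in S),
          {in S &, injective (fun P => pdelta delta P w)},
          (forall R, R \in S -> exists2 P, P \in S & pdelta delta P w = R)
        & exists2 P, P \in S & pdelta delta P w <> P].

From mathcomp Require Import all_boot.
From mathcomp Require Import zify.

Set Implicit Arguments.
Unset Strict Implicit.
Unset Printing Implicit Defensive.

(* The powerset transition by a fixed word is monotone for inclusion.  A
   monotone map that permutes a finite family cyclically cannot have one member
   of the cycle included in another: if X is included in f^d X, iterating gives
   f^d X included in f^(n d) X = X, where n is the length of the cycle. *)

Lemma pstep_subset (Q Sigma : finType) (delta : Q -> Sigma -> {set Q})
    (a : Sigma) : {homo pstep delta ^~ a : A B / A \subset B}.
Proof.
move=> A B sAB; apply/bigcupsP=> p pA.
by apply: (bigcup_sup p); apply: (subsetP sAB).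
Qed.

Lemma pdelta_subset (Q Sigma : finType) (delta : Q -> Sigma -> {set Q})
    (u : seq Sigma) : {homo pdelta delta ^~ u : A B / A \subset B}.
Proof.
elim: u => [|a u IHu] A B sAB //=.
by apply: IHu; apply: pstep_subset.
Qed.

Section MonotoneCycle.

Variables (T : finType) (f : {set T} -> {set T}).
Hypothesis f_subset : {homo f : A B / A \subset B}.

Lemma iter_subset (k : nat) : {homo iter k f : A B / A \subset B}.
Proof. by elim: k => [|k IHk] A B sAB //=; apply/f_subset/IHk. Qed.

Lemma iter_subset_periodic (X : {set T}) (n d : nat) :
  0 < n -> iter n f X = X -> X \subset iter d f X -> iter d f X = X.
Proof.
move=> n_gt0 fnX sX.
have chain k : iter d f X \subset iter (k.+1 * d) f X.
  elim: k => [|k IHk]; first by rewrite mul1n.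
  apply: subset_trans IHk _.
  by rewrite [k.+2 * d]mulSn addnC iterD; apply: iter_subset.
have fndX : iter (n * d) f X = X.
  by rewrite mulnC; elim: d {chain sX} => //= d IHd; rewrite mulSn iterD IHd fnX.
apply/eqP; rewrite eqEsubset sX andbT.
by have := chain n.-1; rewrite prednK // fndX.
Qed.

Variables (n : nat) (P : nat -> {set T}).
Hypothesis n_gt0 : 0 < n.
Hypothesis f_step : forall i, i < n.-1 -> f (P i) = P i.+1.
Hypothesis f_last : f (P n.-1) = P 0.

Lemma f_cycle (i : nat) : i < n -> f (P i) = P (i.+1 %% n).
Proof.
move=> lt_in; have [lt_i_n1 | ge_i_n1] := ltnP i n.-1.
  by rewrite f_step // modn_small //; lia.
have -> : i = n.-1 by lia.
by rewrite f_last prednK // modnn.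
Qed.

Lemma iter_cycle (k : nat) : iter k f (P 0) = P (k %% n).
Proof.
elim: k => [|k IHk]; first by rewrite mod0n.
by rewrite iterS IHk f_cycle ?ltn_pmod // -addn1 modnDml addn1.
Qed.

Lemma cycle_subset_eq (i j : nat) :
  i < n -> j < n -> P i \subset P j -> P i = P j.
Proof.
move=> lt_in lt_jn sPij.
have iterP k : k < n -> P k = iter k f (P 0) by move=> ?; rewrite iter_cycle modn_small.
have shift : iter (j + n - i) f (P i) = P j.
  rewrite [P i]iterP // -iterD subnK; last by lia.
  by rewrite iter_cycle modnDr modn_small.
have cycleP : iter n f (P i) = P i.
  by rewrite {1}[P i]iterP // -iterD iter_cycle modnDl modn_small.
apply/esym; rewrite -shift; apply: iter_subset_periodic n_gt0 cycleP _.
by rewrite shift.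
Qed.

End MonotoneCycle.

Theorem mainTheorem1 (Q Sigma : finType) (delta : Q -> Sigma -> {set Q})
  (q0 : Q) (F : {set Q})
  (Hmin : reachable_part_minimal delta q0 F)
  (Hperm : ~ reachable_part_permutation_free delta q0)
  (n : nat) (Hn : 2 <= n) (P : nat -> {set Q}) (w : seq Sigma)
  (Hreach : forall i, i < n -> preachable delta q0 (P i))
  (Hdist : forall i j, i < n -> j < n -> i <> j -> P i <> P j)
  (Hstep : forall i, i < n.-1 -> pdelta delta (P i) w = P i.+1)
  (Hlast : pdelta delta (P n.-1) w = P 0) :
  ~ exists i j, [/\ i < n, j < n, i <> j & P i \subset P j].
Proof.
move=> [i [j [lt_in lt_jn neq_ij sPij]]].
apply: (Hdist i j lt_in lt_jn neq_ij).
have n_gt0 : 0 < n by apply: leq_trans Hn.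
exact: (cycle_subset_eq (pdelta_subset delta w) n_gt0 Hstep Hlast lt_in lt_jn sPij).
Qed.
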